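(* Let $E$ be the group of subsets of $\{1,2,3,4,5\}$ of even cardinality with symmetric difference as group operation (so $E\cong\boldsymbol{\mu}_2^4$), and for an even subset $A$ write $\iota_A$ for the corresponding element of $E$ (e.g. $\iota_{12}=\iota_{\{1,2\}}$). Let $W=E\rtimes\mathfrak{S}_5$, where $\mathfrak{S}_5$ acts on $E$ by permuting elements of subsets, so that $\sigma\iota_A\sigma^{-1}=\iota_{\sigma(A)}$ in $W$, and let $\rho\colon W\to\mathfrak{S}_5$ be the natural projection. Let $H\subset\operatorname{Ker}(\rho)=E$ be a subgroup of order at least $8$, and assume that the element $(1234)\in\mathfrak{S}_5\subset W$ normalizes $H$. Then $\iota_{12}\in H$.
   Context: $W$ is isomorphic to the Weyl group $W(\mathrm{D}_5)$; $\mathfrak{S}_5$ is the symmetric group on $\{1,\dots,5\}$ and $(1234)$ the $4$-cycle. *)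

From mathcomp Require Import all_boot all_order all_fingroup.
Set Implicit Arguments. Unset Strict Implicit. Unset Printing Implicit Defensive.

Definition pt (k : nat) : 'I_5 := inord k.-1.

Definition symdiff (A B : {set 'I_5}) : {set 'I_5} := (A :\: B) :|: (B :\: A).

Definition evenset (A : {set 'I_5}) : bool := ~~ odd #|A|.

Definition subgroupE (H : {set {set 'I_5}}) : Prop :=
  [/\ forall A, A \in H -> evenset A,
      set0 \in H &
      forall A B, A \in H -> B \in H -> symdiff A B \in H].

Definition c1234_fun (i : 'I_5) : 'I_5 :=
  if (i : nat) < 3 then inord i.+1 else if (i : nat) == 3 then inord 0 else i.

Lemma c1234_inj : injective c1234_fun.
Proof.
move=> i j; rewrite /c1234_fun.
case: i => [[|[|[|[|[|?]]]]] Hi] //; case: j => [[|[|[|[|[|?]]]]] Hj] //=;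
  move/(congr1 val); rewrite /= ?inordK //= => H; apply/val_inj => //.
Qed.

Definition c1234 : {perm 'I_5} := perm c1234_inj.

(* Inside W = E ⋊ S_5 we have  s * iota_A * s^-1 = iota_{s(A)}, so s
   normalizes a subgroup H of E iff {s(A) | A in H} = H. *)
Definition normalizes (s : {perm 'I_5}) (H : {set {set 'I_5}}) : Prop :=
  (fun A : {set 'I_5} => [set s x | x in A]) @: H = H.

Definition iota12 : {set 'I_5} := [set pt 1; pt 2].

From mathcomp Require Import all_boot all_order all_fingroup.
From mathcomp Require Import zify.
Set Implicit Arguments. Unset Strict Implicit.

(* If iota12 were not in H, then H would have index 2 in E with iota12
   representing the other coset, so for every even A either A or
   A + iota12 lies in H; in particular iota15 or iota25 does.  Adding to
   iota_{k5} its image iota_{k+1,5} under s = (1234) puts iota_{k,k+1} in H,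
   but iota_{k,k+1} is an s-conjugate of iota12. *)

Lemma cardsU_disjoint (T : finType) (A B : {set T}) :
  [disjoint A & B] -> #|A :|: B| = #|A| + #|B|.
Proof. by move=> disjAB; apply/eqP; rewrite (leq_card_setU A B).2. Qed.

Lemma imset_set2 (aT rT : finType) (f : aT -> rT) (a b : aT) :
  f @: [set a; b] = [set f a; f b].
Proof. by rewrite imsetU1 imset_set1. Qed.

Implicit Types (A B C : {set 'I_5}) (H : {set {set 'I_5}}).

Lemma symdiffK A B : symdiff (symdiff A B) B = A.
Proof.
by apply/setP=> x; rewrite /symdiff !inE; case: (x \in A); case: (x \in B).
Qed.

Lemma symdiffKl A B : symdiff A (symdiff A B) = B.
Proof.
by apply/setP=> x; rewrite /symdiff !inE; case: (x \in A); case: (x \in B).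
Qed.

Lemma odd_card_symdiff A B : odd #|symdiff A B| = odd #|A| (+) odd #|B|.
Proof.
have disjointD : [disjoint A :\: B & B :\: A].
  rewrite -setI_eq0; apply/eqP/setP=> x; rewrite !inE.
  by case: (x \in A); case: (x \in B).
rewrite /symdiff (cardsU_disjoint disjointD) -(cardsID B A) -(cardsID A B).
by rewrite setIC !oddD; case: (odd _); case: (odd _); case: (odd _).
Qed.

Lemma card_evensets : #|[set A | evenset A]| = 16.
Proof.
set E := [set A | evenset A].
have toggleK : involutive (symdiff^~ [set pt 1]) := symdiffK^~ _.
have toggle_E : symdiff^~ [set pt 1] @: E = ~: E.
  apply/setP=> A; rewrite (can_imset_pre _ toggleK) !inE.
  by rewrite /evenset odd_card_symdiff cards1 addbT.
have cardEC : #|~: E| = #|E| by rewrite -toggle_E card_imset //; apply: inv_inj.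
have := cardsC E; rewrite cardEC -cardsT -powersetT card_powerset cardsT.
by rewrite card_ord; lia.
Qed.

Lemma symdiff_pairs (a b c : 'I_5) :
  a != b -> a != c -> b != c -> symdiff [set c; a] [set c; b] = [set a; b].
Proof.
move=> ab ac bc; apply/setP=> y; rewrite /symdiff !inE.
have [->|_] := eqVneq y c.
  by rewrite ![c == _]eq_sym (negbTE ac) (negbTE bc).
by have [->|_] := eqVneq y a; rewrite ?(negbTE ab) ?andbF.
Qed.

Section ClosedFamily.

Variable H : {set {set 'I_5}}.
Hypothesis symdiff_closed : {in H &, forall A B, symdiff A B \in H}.

Lemma card_symdiff_coset A :
  A \notin H -> #|H :|: symdiff A @: H| = (#|H|).*2.
Proof.
move=> AnotH; have disjointH : [disjoint H & symdiff A @: H].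
  rewrite disjoint_subset; apply/subsetP=> B HB; rewrite inE.
  apply/imsetP=> -[C HC defB]; apply/negP: AnotH.
  by rewrite -(symdiffK A C) -defB symdiff_closed.
rewrite (cardsU_disjoint disjointH) card_imset ?addnn //.
exact: can_inj (symdiffKl A).
Qed.

Lemma perm_pair_mem (s : {perm 'I_5}) (a c : 'I_5) :
  {in H, forall A, s @: A \in H} -> s c = c -> a != c -> s a != a ->
  [set a; c] \in H -> [set a; s a] \in H.
Proof.
move=> s_stable sc ac sa Hac.
have sac : s a != c by rewrite -sc (inj_eq perm_inj).
have := symdiff_closed Hac (s_stable _ Hac).
by rewrite imset_set2 sc ![[set _; c]]setUC symdiff_pairs // eq_sym.
Qed.

End ClosedFamily.

Lemma normalizes_mem (s : {perm 'I_5}) H A :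
  normalizes s H -> A \in H -> s @: A \in H.
Proof. by move=> normH HA; rewrite -normH imset_f. Qed.

Lemma subgroupE_cover H A B :
  subgroupE H -> 8 <= #|H| -> evenset A -> A \notin H -> evenset B ->
  B \in H \/ symdiff A B \in H.
Proof.
case=> H_even _ H_closed H_large A_even AnotH B_even.
set E := [set C : {set 'I_5} | evenset C].
have sub_E : H :|: symdiff A @: H \subset E.
  apply/subsetP=> C; rewrite !inE => /orP[/H_even // | /imsetP[D HD ->]].
  by rewrite /evenset odd_card_symdiff (negbTE A_even) (negbTE (H_even _ HD)).
have card_E : #|E| = 16 := card_evensets.
have cosets_E : H :|: symdiff A @: H = E.
  by apply/eqP; rewrite eqEcard sub_E card_symdiff_coset // card_E -muln2; lia.
have : B \in H :|: symdiff A @: H by rewrite cosets_E inE.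
by rewrite inE (can_imset_pre _ (symdiffKl A)) inE => /orP[]; [left | right].
Qed.

Lemma pt_eq i j : 0 < i <= 5 -> 0 < j <= 5 -> (pt i == pt j) = (i == j).
Proof.
by case: i j => [|i] [|j] // ? ?; rewrite -val_eqE /= !inordK ?eqSS.
Qed.

Lemma c1234_pt k : 0 < k <= 4 -> c1234 (pt k) = pt (k %% 4).+1.
Proof.
case: k => [|[|[|[|[|]]]]] // _.
all: by apply/val_inj; rewrite permE /c1234_fun /pt /= !inordK.
Qed.

Lemma c1234_pt5 : c1234 (pt 5) = pt 5.
Proof. by apply/val_inj; rewrite permE /c1234_fun /pt /= !inordK. Qed.

Theorem lemma3p2 (H : {set {set 'I_5}}) :
  subgroupE H -> 8 <= #|H| -> normalizes c1234 H -> iota12 \in H.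
Proof.
move=> subH H_large normH; apply: contraT => not12.
have [_ _ H_closed] := subH.
have stable A : A \in H -> c1234 @: A \in H by apply: normalizes_mem.
have step k : 0 < k < 4 -> [set pt k; pt 5] \in H -> [set pt k; pt k.+1] \in H.
  move=> k_range Hk5.
  have c1234_k : c1234 (pt k) = pt k.+1 by rewrite c1234_pt ?modn_small //; lia.
  rewrite -c1234_k; apply: (perm_pair_mem H_closed stable c1234_pt5 _ _ Hk5).
    by rewrite pt_eq; lia.
  by rewrite c1234_k pt_eq; lia.
have [H15 | H25] : [set pt 1; pt 5] \in H \/ [set pt 2; pt 5] \in H.
  rewrite -[[set pt 2; pt 5]](@symdiff_pairs _ _ (pt 1)) ?pt_eq //.
  by apply: subgroupE_cover; rewrite /evenset ?cards2 ?pt_eq.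
  by rewrite (step 1 isT H15) in not12.
have := stable _ (stable _ (stable _ (step 2 isT H25))).
by rewrite !imset_set2 !c1234_pt //= (negbTE not12).
Qed.
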